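(* Let $\mathcal X,\mathcal U$ be finite nonempty sets, $f:\mathcal X\times\mathcal U\to\mathcal X$ and $\ell,g:\mathcal X\to\mathbb R$. Let $V_{\mathrm A}^*(x)=\max_{\pi\in\Pi}\min_{\tau\in\mathbb N}g(\xi_x^\pi(\tau))$, $\tilde\ell(x)=\min\{\ell(x),V_{\mathrm A}^*(x)\}$, and $$\tilde v_{\mathrm{RA}}^*(x)=\max_{\mathbf u\in\mathbb U}\max_{\tau\in\mathbb N}\min\Big\{\tilde\ell(\xi_x^{\mathbf u}(\tau)),\min_{\kappa\le\tau}g(\xi_x^{\mathbf u}(\kappa))\Big\}.$$ Then there is a policy $\pi\in\Pi$ such that for all $x\in\mathcal X$, $$\tilde v_{\mathrm{RA}}^*(x)=\max_{\tau\in\mathbb N}\min\Big\{\tilde\ell(\xi_x^\pi(\tau)),\min_{\kappa\le\tau}g(\xi_x^\pi(\kappa))\Big\}.$$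
   Context: $\mathbb N=\{0,1,\dots\}$; $\Pi$ is the set of maps $\mathcal X\to\mathcal U$; $\mathbb U$ is the set of sequences $\mathbb N\to\mathcal U$. For $\pi\in\Pi$: $\xi_x^\pi(0)=x$, $\xi_x^\pi(t+1)=f(\xi_x^\pi(t),\pi(\xi_x^\pi(t)))$. For $\mathbf u\in\mathbb U$: $\xi_x^{\mathbf u}(0)=x$, $\xi_x^{\mathbf u}(t+1)=f(\xi_x^{\mathbf u}(t),\mathbf u(t))$. *)

From mathcomp Require Import all_boot all_order all_algebra.
From mathcomp Require Import boolp classical_sets reals.
Set Implicit Arguments. Unset Strict Implicit. Unset Printing Implicit Defensive.
Import Order.TTheory GRing.Theory Num.Theory.
Local Open Scope ring_scope.
Local Open Scope classical_set_scope.

Section Defs.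
Variables (X U : finType) (f : X -> U -> X).

Fixpoint traj_pi (pi : X -> U) (x : X) (t : nat) : X :=
  match t with
  | 0 => x
  | t'.+1 => let y := traj_pi pi x t' in f y (pi y)
  end.

Fixpoint traj_u (u : nat -> U) (x : X) (t : nat) : X :=
  match t with
  | 0 => x
  | t'.+1 => let y := traj_u u x t' in f y (u t')
  end.

Variable R : realType.
Variables (ell g : X -> R).

Definition VA (x : X) : R :=
  sup [set inf (range (fun t => g (traj_pi pi x t))) | pi in [set: X -> U]].

Definition ell_t (x : X) : R := Num.min (ell x) (VA x).

Definition ra_payoff (xi : nat -> X) : R :=
  sup (range (fun tau : nat =>
    Num.min (ell_t (xi tau)) (inf [set g (xi k) | k in [set k : nat | (k <= tau)%N]]))).

Definition vRA (x : X) : R :=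
  sup [set ra_payoff (traj_u u x) | u in [set: nat -> U]].

End Defs.

From mathcomp Require Import all_boot all_order all_algebra.
From mathcomp Require Import boolp classical_sets reals.
Set Implicit Arguments. Unset Strict Implicit. Unset Printing Implicit Defensive.
Import Order.TTheory GRing.Theory Num.Theory.
Local Open Scope ring_scope.
Local Open Scope classical_set_scope.

(** The terminal reward [ell_t] may be any function [h] on the states.  Call
  a level [c] reachable from [x] if some control sequence leads from [x] to a
  state with [h >= c] while keeping [g >= c] along the way.  Reachable levels
  are dominated by the finitely many candidates [min (h z) (g z')], so every
  state has a best reachable level [V x], reached in a least number of steps
  [T x].  The policy plays the first control of an optimal sequence from [x];
  its successor [y] has [V x <= V y], and [T y < T x] when [V x = V y].
  Induction on the number of states of value larger than [V x], then on
  [T x], shows that the policy reaches [V x] from every [x]. *)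

Lemma finite_norm_bound (T : finType) (R : realType) (F : T -> R) :
  exists B, forall z, `|F z| <= B.
Proof.
exists (\sum_z `|F z|) => z.
by rewrite (bigD1 z) //= lerDl; apply: sumr_ge0.
Qed.

Section Trajectories.
Variables (X U : finType) (f : X -> U -> X).

Lemma traj_uS (u : nat -> U) x :
  traj_u f u x \o succn = traj_u f (u \o succn) (f x (u 0%N)).
Proof. by apply: funext => k /=; elim: k => [|k IH] //=; rewrite IH. Qed.

Lemma traj_piS (pi : X -> U) x :
  traj_pi f pi x \o succn = traj_pi f pi (f x (pi x)).
Proof. by apply: funext => k /=; elim: k => [|k IH] //=; rewrite IH. Qed.

Lemma traj_pi_open_loop (pi : X -> U) x :
  traj_pi f pi x = traj_u f (fun t => pi (traj_pi f pi x t)) x.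
Proof. by apply: funext; elim => [|k IH] //=; rewrite -IH. Qed.

End Trajectories.

Section Attains.
Variables (X : finType) (R : realType) (h g : X -> R).

Definition attains (c : R) (xi : nat -> X) (n : nat) :=
  c <= h (xi n) /\ forall k, (k <= n)%N -> c <= g (xi k).

Lemma attains_le c c' xi n : c' <= c -> attains c xi n -> attains c' xi n.
Proof.
move=> c'c [hn gk]; split; first exact: le_trans hn.
by move=> k kn; apply: le_trans c'c (gk k kn).
Qed.

Lemma attains0 c xi : attains c xi 0 <-> c <= h (xi 0%N) /\ c <= g (xi 0%N).
Proof.
split=> [[hc /(_ 0%N isT)]|[hc gc]] //.
by split=> // k; rewrite leqn0 => /eqP ->.
Qed.

Lemma attainsS c xi n :
  attains c xi n.+1 <-> c <= g (xi 0%N) /\ attains c (xi \o succn) n.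
Proof.
split=> [[hn gk]|[g0 [hn gk]]].
  by split; [apply: gk | split=> // k kn; apply: (gk k.+1)].
by split=> // -[|k] kn //; apply: gk.
Qed.

Definition stage_value (xi : nat -> X) (tau : nat) : R :=
  Num.min (h (xi tau)) (inf [set g (xi k) | k in [set k : nat | (k <= tau)%N]]).

Definition ra_value (xi : nat -> X) : R := sup (range (stage_value xi)).

Lemma le_stage_value c xi tau : c <= stage_value xi tau <-> attains c xi tau.
Proof.
have [B gB] := finite_norm_bound g.
have lbG : has_lbound [set g (xi k) | k in [set k : nat | (k <= tau)%N]].
  by exists (- B) => _ [k _ <-]; apply: lerNnormlW.
rewrite /stage_value le_min; split=> [/andP[hc gc]|[hc gc]].
  by split=> // k kt; apply: le_trans gc (ge_inf lbG _); exists k.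
rewrite hc /=; apply: lb_le_inf; first by exists (g (xi 0%N)), 0%N.
by move=> _ [k kt <-]; apply: gc.
Qed.

Lemma stage_value_attains xi tau : attains (stage_value xi tau) xi tau.
Proof. exact/le_stage_value. Qed.

Lemma stage_value_bound : exists B, forall xi tau, stage_value xi tau <= B.
Proof.
have [B hB] := finite_norm_bound h.
by exists B => xi tau; rewrite ge_min (ler_normlW (hB _)).
Qed.

Lemma ra_value_ge c xi t : attains c xi t -> c <= ra_value xi.
Proof.
move=> /le_stage_value ct; apply: le_trans ct _.
have [B sB] := stage_value_bound.
by apply: ub_le_sup; [exists B => _ [s _ <-]; apply: sB | exists t].
Qed.

Lemma ra_value_bound : exists B, forall xi, ra_value xi <= B.
Proof.
have [B sB] := stage_value_bound.
exists B => xi; apply: ge_sup => [|_ [t _ <-]] //.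
by exists (stage_value xi 0), 0%N.
Qed.

End Attains.

Section OptimalPolicy.
Variables (X U : finType) (f : X -> U -> X) (R : realType) (h g : X -> R).
Variable u0 : U.

Definition reachable (c : R) (x : X) (n : nat) :=
  exists u, attains h g c (traj_u f u x) n.

Definition level (p : X * X) : R := Num.min (h p.1) (g p.2).

Lemma attains_level c xi n :
  attains h g c xi n -> exists p, c <= level p /\ attains h g (level p) xi n.
Proof.
move=> [hn gk].
have [k _ kmin] := @arg_minP _ _ _ (ord0 : 'I_n.+1) xpredT
  (fun k : 'I_n.+1 => g (xi k)) isT.
exists (xi n, xi k); split; first by rewrite le_min hn; apply: gk (ltn_ord k).
split=> [|j jn]; first by rewrite ge_min lexx.
by rewrite ge_min (kmin (Ordinal (jn : (j < n.+1)%N))) ?orbT.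
Qed.

Lemma reachable_max x :
  exists v, (exists n, reachable v x n) /\ forall c n, reachable c x n -> c <= v.
Proof.
pose P p := `[< exists n, reachable (level p) x n >].
have P0 : P (x, x).
  apply/asboolP; exists 0%N, (fun _ => u0); apply/attains0.
  by rewrite /level /= !ge_min !lexx orbT.
have [p /asboolP reach_p pmax] := @arg_maxP _ _ _ (x, x) P level P0.
exists (level p); split=> // c n [u /attains_level [q [cq aq]]].
by apply: le_trans cq (pmax q _); apply/asboolP; exists n, u.
Qed.

Definition value (x : X) : R := sval (cid (reachable_max x)).

Lemma value_reachable x : exists n, `[< reachable (value x) x n >].
Proof.
by have [[n rn] _] := svalP (cid (reachable_max x)); exists n; apply/asboolP.
Qed.

Lemma reachable_le_value c x n : reachable c x n -> c <= value x.
Proof. exact: (svalP (cid (reachable_max x))).2. Qed.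

Definition value_time (x : X) : nat := ex_minn (value_reachable x).

Lemma value_timeP x :
  reachable (value x) x (value_time x) /\
  forall n, reachable (value x) x n -> (value_time x <= n)%N.
Proof.
rewrite /value_time; case: ex_minnP => n /asboolP rn nmin.
by split=> // m rm; apply/nmin/asboolP.
Qed.

Definition value_control (x : X) : nat -> U := sval (cid (value_timeP x).1).

Definition opt_policy (x : X) : U := value_control x 0%N.

Lemma value_control_attains x :
  attains h g (value x) (traj_u f (value_control x) x) (value_time x).
Proof. exact: (svalP (cid (value_timeP x).1)). Qed.

Lemma opt_policy_step x m : value_time x = m.+1 ->
  value x <= g x /\ reachable (value x) (f x (opt_policy x)) m.
Proof.
move=> tx; have := value_control_attains x; rewrite tx attainsS traj_uS.
by move=> [gx am]; split=> //; exists (value_control x \o succn).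
Qed.

Definition higher (x : X) : {set X} := [set z | value x < value z].

Lemma card_higher_lt x y : value x < value y -> (#|higher y| < #|higher x|)%N.
Proof.
move=> xy; apply/proper_card/properP; split.
  by apply/fintype.subsetP => z; rewrite !inE; apply: lt_trans.
by exists y; rewrite !inE ?xy ?ltxx.
Qed.

Lemma opt_policy_attains_value x :
  exists t, attains h g (value x) (traj_pi f opt_policy x) t.
Proof.
suff: forall a b x, #|higher x| = a -> value_time x = b ->
    exists t, attains h g (value x) (traj_pi f opt_policy x) t.
  by apply.
elim/ltn_ind => a IHa; elim/ltn_ind => b IHb {}x Ha Hb.
case: b IHb Hb => [|m] IHb Hb.
  exists 0%N; have := value_control_attains x.
  by rewrite Hb !attains0.
have [gx ry] := opt_policy_step Hb.
set y := f x (opt_policy x) in ry *.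
have [t aty] : exists t, attains h g (value y) (traj_pi f opt_policy y) t.
  have := reachable_le_value ry; rewrite le_eqVlt => /predU1P[Exy | xy].
    have [_ ymin] := value_timeP y.
    apply: (IHb (value_time y)) => //; first by rewrite ltnS ymin -?Exy.
    by rewrite -Ha /higher Exy.
  by apply: (IHa #|higher y|) => //; rewrite -Ha card_higher_lt.
exists t.+1; apply/attainsS; split=> //.
by rewrite traj_piS; apply: attains_le aty; apply: reachable_le_value ry.
Qed.

Lemma opt_policy_optimal c x n :
  reachable c x n -> exists t, attains h g c (traj_pi f opt_policy x) t.
Proof.
move=> /reachable_le_value cx; have [t ct] := opt_policy_attains_value x.
by exists t; apply: attains_le ct.
Qed.

Lemma ra_value_opt_policy x u :
  ra_value h g (traj_u f u x) <= ra_value h g (traj_pi f opt_policy x).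
Proof.
apply: ge_sup; first by exists (stage_value h g (traj_u f u x) 0), 0%N.
move=> _ [tau _ <-].
have : reachable (stage_value h g (traj_u f u x) tau) x tau.
  by exists u; apply: stage_value_attains.
by move=> /opt_policy_optimal [t /ra_value_ge].
Qed.

End OptimalPolicy.

Theorem mainTheorem5 (X U : finType) (hX : inhabited X) (hU : inhabited U)
  (f : X -> U -> X) (R : realType) (ell g : X -> R) :
  exists pi : X -> U, forall x : X,
    vRA f ell g x = ra_payoff f ell g (traj_pi f pi x).
Proof.
case: hU => u0; set h := ell_t f ell g; pose pi := opt_policy f h g u0.
exists pi => x; rewrite /vRA /ra_payoff -/h.
apply/eqP; rewrite eq_le; apply/andP; split.
  apply: ge_sup => [|_ [u _ <-]]; last exact: ra_value_opt_policy.
  by exists (ra_value h g (traj_u f (fun _ => u0) x)), (fun _ => u0).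
have [B rB] := ra_value_bound h g.
have ubE : has_ubound [set ra_value h g (traj_u f u x) | u in [set: nat -> U]].
  by exists B => _ [u _ <-]; apply: rB.
rewrite [traj_pi f pi x]traj_pi_open_loop; apply: (ub_le_sup ubE).
by exists (fun t => pi (traj_pi f pi x t)).
Qed.
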